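(* Let $K$ be a field of characteristic zero and $m\ge1$. The tropical valuation $\operatorname{trop}:K(\!(\mathbf{t})\!)\to V\mathbb{B}(\mathbf{t})$ is a surjective $K$-algebra B\'ezout valuation; in particular, for all $a,b\in K(\!(\mathbf{t})\!)$ there exist $x,y\in K(\!(\mathbf{t})\!)^\circ$ with $\operatorname{trop}(xa+yb)=\operatorname{trop}(a)\oplus\operatorname{trop}(b)$.
   Context: $\mathbf{t}=(t_1,\dots,t_m)$, $K(\!(\mathbf{t})\!)=\operatorname{Frac}K[\![\mathbf{t}]\!]$. For $A\subseteq\mathbb{N}^m$ the Newton polyhedron is $\operatorname{conv}(A)+\mathbb{R}^m_{\ge0}$. $V\mathbb{B}[\mathbf{t}]$ is the idempotent semiring of subsets of $\mathbb{N}^m$ equal to the vertex set of their Newton polyhedron, with $a\oplus b$ = vertex set of the Newton polyhedron of $a\cup b$ and $a\odot b$ = vertex set of that of the Minkowski sum $a+b$ ($0=\emptyset$, $1=\{0\}$). $V\mathbb{B}(\mathbf{t})$ is its fraction semifield, with $\frac ab\oplus\frac cd=\frac{a\odot d\oplus b\odot c}{b\odot d}$, $\frac ab\odot\frac cd=\frac{a\odot c}{b\odot d}$, ordered by $x\le y$ iff $x\oplus y=y$. $\operatorname{trop}(f)$ for $f\in K[\![\mathbf{t}]\!]$ is the vertex set of the Newton polyhedron of $\operatorname{Supp}(f)$, and $\operatorname{trop}(f/g)=\operatorname{trop}(f)/\operatorname{trop}(g)$; this is known to be a surjective valuation (multiplicative, $\operatorname{trop}(a+b)\le\operatorname{trop}(a)\oplus\operatorname{trop}(b)$,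 zero only at $0$). $K(\!(\mathbf{t})\!)^\circ=\{q:\operatorname{trop}(q)\le1\}$. A B\'ezout valuation $v$ on a field $R$ is one such that for all $a,b$ there are $x,y\in R^\circ$ with $v(xa+yb)=v(a)+v(b)$; ''$K$-algebra'' means $\operatorname{trop}(c)=1$ for nonzero constants $c\in K$. *)

From Stdlib Require Import Reals List.
From HB Require Import structures.
From mathcomp Require Import all_boot all_order all_algebra.
Set Implicit Arguments. Unset Strict Implicit. Unset Printing Implicit Defensive.
Import Order.TTheory GRing.Theory Num.Theory.
Local Open Scope ring_scope.

Section Defs.
Variable m : nat.

Definition mon := 'I_m -> nat.
Definition mset := mon -> Prop.
Definition sameset (A B : mset) : Prop := forall e, A e <-> B e.

Definition rpoint := 'I_m -> R.

Definition wcomb (l : list (R * mon)) : rpoint :=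
  fun i => fold_right (fun c acc => Rplus (Rmult c.1 (INR (c.2 i))) acc) R0 l.
Definition wsum (l : list (R * mon)) : R :=
  fold_right (fun c acc => Rplus c.1 acc) R0 l.

(* Newton polyhedron  conv(A) + R^m_{>=0} *)
Definition newton_polyhedron (A : mset) : rpoint -> Prop := fun p =>
  exists l : list (R * mon),
    Forall (fun c => A c.2 /\ Rle R0 c.1) l /\ wsum l = R1 /\
    forall i, Rle (wcomb l i) (p i).

Definition is_vertex (P : rpoint -> Prop) (v : rpoint) : Prop :=
  P v /\ forall (p q : rpoint) (t : R), P p -> P q -> Rlt R0 t -> Rlt t R1 ->
    (forall i, v i = Rplus (Rmult t (p i)) (Rmult (Rminus R1 t) (q i))) ->
    forall i, p i = q i.

Definition vert (A : mset) : mset := fun e =>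
  is_vertex (newton_polyhedron A) (fun i => INR (e i)).

Definition isVB (A : mset) : Prop := sameset (vert A) A.
Definition vb0 : mset := fun _ => False.
Definition vb1 : mset := fun e => forall i, e i = 0%N.
Definition vbplus (A B : mset) : mset := vert (fun e => A e \/ B e).
Definition vbmul (A B : mset) : mset :=
  vert (fun e => exists a b, A a /\ B b /\ forall i, e i = (a i + b i)%N).

Definition vbfrac := (mset * mset)%type.
Definition isVBf (x : vbfrac) : Prop :=
  isVB x.1 /\ isVB x.2 /\ exists e, x.2 e.           (* denominator <> 0 *)
Definition vbeq (x y : vbfrac) : Prop :=
  sameset (vbmul x.1 y.2) (vbmul x.2 y.1).
Definition vbfplus (x y : vbfrac) : vbfrac :=
  (vbplus (vbmul x.1 y.2) (vbmul x.2 y.1), vbmul x.2 y.2).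
Definition vbfmul (x y : vbfrac) : vbfrac := (vbmul x.1 y.1, vbmul x.2 y.2).
Definition vbf0 : vbfrac := (vb0, vb1).
Definition vbf1 : vbfrac := (vb1, vb1).
Definition vbfle (x y : vbfrac) : Prop := vbeq (vbfplus x y) y.

Variable K : fieldType.
Definition pser := mon -> K.
Definition supp (f : pser) : mset := fun e => f e != 0.
Definition pzero (f : pser) : Prop := forall e, f e = 0.
Definition padd (f g : pser) : pser := fun e => f e + g e.
Definition pbound (e : mon) : nat := (\sum_(i < m) e i).+1.
Definition pmul (f g : pser) : pser := fun e =>
  \sum_(a : {ffun 'I_m -> 'I_(pbound e)} | [forall i, (a i <= e i)%N])
     f (fun i => nat_of_ord (a i)) * g (fun i => (e i - a i)%N).
Definition pconst (c : K) : pser := fun e => if [forall i, e i == 0%N] then c else 0.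

(* ---------- K((t)) = Frac K[[t]]: pairs f/g with g <> 0 ---------- *)
Definition lfrac := (pser * pser)%type.
Definition lvalid (q : lfrac) : Prop := ~ pzero q.2.
Definition leq_frac (q q' : lfrac) : Prop := pzero (fun e => pmul q.1 q'.2 e - pmul q'.1 q.2 e).
Definition ladd (p q : lfrac) : lfrac := (padd (pmul p.1 q.2) (pmul q.1 p.2), pmul p.2 q.2).
Definition lmul (p q : lfrac) : lfrac := (pmul p.1 q.1, pmul p.2 q.2).
Definition lconst (c : K) : lfrac := (pconst c, pconst 1).

Definition trop_ps (f : pser) : mset := vert (supp f).
Definition trop (q : lfrac) : vbfrac := (trop_ps q.1, trop_ps q.2).

End Defs.

From Stdlib Require Import Reals List Lra Classical FunctionalExtensionality ClassicalDescription.
From Stdlib Require Import Setoid Morphisms.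
From HB Require Import structures.
From mathcomp Require Import all_boot all_order all_algebra.
From mathcomp Require Import zify.
Import Order.TTheory GRing.Theory Num.Theory.
Set Implicit Arguments. Unset Strict Implicit.

(* Everything in VB(t) only depends on Newton polyhedra.  A set A of exponents
   and its vertex set span the same polyhedron: Dickson's lemma gives a finite
   subset of A spanning it, from which non-vertices can be discarded one at a
   time.  So trop can be computed on supports, up to "same Newton polyhedron".
   The support of fg spans the same polyhedron as Supp f + Supp g, because a
   vertex of a Minkowski sum decomposes uniquely and its coefficient in fg is a
   single nonzero product; and Supp (f + g) lies in Supp f \cup Supp g.  For the
   Bezout property take x = 1 and y = c constant: K is infinite in
   characteristic 0, so c can avoid the finitely many values -u(v)/w(v) at the
   vertices v of Supp u \cup Supp w, and then no vertex cancels in u + c w. *)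

Lemma map_In_mem (T : Type) (U : eqType) (h : T -> U) (F : list T) v :
  In v F -> h v \in [seq h x | x <- F].
Proof. by elim: F => [//|x F IH] /= [-> | /IH]; rewrite inE ?eqxx // => ->; rewrite orbT. Qed.

Section NewtonPolyhedra.
Variable m : nat.
Local Open Scope R_scope.
Notation NP := (@newton_polyhedron m).
Implicit Types (A B C : mset m) (e f : mon m) (l : list (R * mon m)).

Definition pt e : rpoint m := fun i => INR (e i).

Definition np_sub A B := forall e, A e -> NP B (pt e).
Definition np_equiv A B := np_sub A B /\ np_sub B A.

Definition msum A B : mset m :=
  fun e => exists a b, A a /\ B b /\ forall i, e i = (a i + b i)%N.
Definition munion A B : mset m := fun e => A e \/ B e.

Definition nonneg_on A l := Forall (fun c => A c.2 /\ 0 <= c.1) l.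

Lemma wcomb_cons c l i : wcomb (c :: l) i = c.1 * INR (c.2 i) + wcomb l i.
Proof. by []. Qed.

Lemma wsum_cons c l : wsum (c :: l) = c.1 + wsum l.
Proof. by []. Qed.

Lemma wsum_app l1 l2 : wsum (l1 ++ l2) = wsum l1 + wsum l2.
Proof.
elim: l1 => [|c l IH]; first by rewrite /= Rplus_0_l.
by rewrite cat_cons !wsum_cons IH Rplus_assoc.
Qed.

Lemma wcomb_app l1 l2 i : wcomb (l1 ++ l2) i = wcomb l1 i + wcomb l2 i.
Proof.
elim: l1 => [|c l IH]; first by rewrite /= Rplus_0_l.
by rewrite cat_cons !wcomb_cons IH Rplus_assoc.
Qed.

Definition scale (s : R) l := map (fun c => (s * c.1, c.2)) l.
Definition shift (b : mon m) l := map (fun c => (c.1, fun i => (c.2 i + b i)%N)) l.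

Lemma wsum_scale s l : wsum (scale s l) = s * wsum l.
Proof.
elim: l => [|c l IH]; first by rewrite /=; ring.
by rewrite /scale map_cons !wsum_cons IH /=; ring.
Qed.

Lemma wcomb_scale s l i : wcomb (scale s l) i = s * wcomb l i.
Proof.
elim: l => [|c l IH]; first by rewrite /=; ring.
by rewrite /scale map_cons !wcomb_cons IH /=; ring.
Qed.

Lemma wsum_shift b l : wsum (shift b l) = wsum l.
Proof. elim: l => [|c l IH] //; by rewrite /shift map_cons !wsum_cons IH. Qed.

Lemma wcomb_shift b l i : wcomb (shift b l) i = wcomb l i + wsum l * INR (b i).
Proof.
elim: l => [|[x e] l IH]; first by rewrite /=; ring.
rewrite /shift map_cons !wcomb_cons !wsum_cons IH /= plus_INR; ring.
Qed.

Lemma wsum_ge0 A l : nonneg_on A l -> 0 <= wsum l.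
Proof. elim=> [|c {}l [_ c_ge0] _ IH]; rewrite /= ?wsum_cons; lra. Qed.

Lemma wcomb_ge0 A l i : nonneg_on A l -> 0 <= wcomb l i.
Proof.
elim=> [|c {}l [_ c_ge0] _ IH]; first by rewrite /=; lra.
rewrite wcomb_cons; have := Rmult_le_pos _ _ c_ge0 (pos_INR (c.2 i)); lra.
Qed.

Lemma nonneg_on_scale A s l : 0 <= s -> nonneg_on A l -> nonneg_on A (scale s l).
Proof.
move=> s_ge0 Al; apply/Forall_map; apply: Forall_impl Al => c [Ac c_ge0].
by split; last exact: Rmult_le_pos.
Qed.

Lemma nonneg_on_app A l1 l2 : nonneg_on A l1 -> nonneg_on A l2 -> nonneg_on A (l1 ++ l2).
Proof. by move=> Al1 Al2; apply/Forall_app. Qed.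

Lemma np_pt A e : A e -> NP A (pt e).
Proof.
move=> Ae; exists [:: (1, e)]; split; first by constructor; [split=> //=; lra | constructor].
by split=> [|i]; rewrite ?wsum_cons ?wcomb_cons /pt /=; lra.
Qed.

Lemma np_up A p q : NP A p -> (forall i, p i <= q i) -> NP A q.
Proof.
move=> [l [Al [l1 lp]]] pq; exists l; do 2!split=> //.
by move=> i; apply: Rle_trans (lp i) (pq i).
Qed.

Lemma np_mono A B p : (forall e, A e -> B e) -> NP A p -> NP B p.
Proof.
move=> AB [l [Al lp]]; exists l; split=> //.
by apply: Forall_impl Al => c [/AB Bc c_ge0].
Qed.

Lemma np_empty A p : (forall e, ~ A e) -> ~ NP A p.
Proof.
move=> A0 [[|c l] [Al [l1 _]]]; first by rewrite /= in l1; lra.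
by case/Forall_cons_iff: Al => [[/A0]].
Qed.

Lemma np_normalize A l : nonneg_on A l -> 0 < wsum l ->
  NP A (fun i => wcomb l i / wsum l).
Proof.
move=> Al l_gt0; exists (scale (/ wsum l) l); split.
  by apply: nonneg_on_scale Al; apply/Rlt_le/Rinv_0_lt_compat.
split=> [|i]; rewrite ?wsum_scale ?wcomb_scale; last by rewrite /Rdiv Rmult_comm; lra.
by field; lra.
Qed.

Lemma np_scaled_combination A l p : nonneg_on A l -> 0 < wsum l ->
  (forall i, wcomb l i <= wsum l * p i) -> NP A p.
Proof.
move=> Al l_gt0 lp; apply: np_up (np_normalize Al l_gt0) _ => i.
have : wcomb l i = wsum l * (wcomb l i / wsum l) by field; lra.
by have := lp i; nra.
Qed.

Lemma np_sub_combination A B l : np_sub A B -> nonneg_on A l ->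
  exists L, nonneg_on B L /\ wsum L = wsum l /\ forall i, wcomb L i <= wcomb l i.
Proof.
move=> AB; elim=> [|[x a] {}l [Aa x_ge0] _ [L [BL [wL cL]]]].
  by exists [::]; split; [constructor | split=> // i; lra].
rewrite /= in Aa x_ge0; have [la [Bla [la1 la_a]]] := AB a Aa.
exists (scale x la ++ L); split; first exact/nonneg_on_app/BL/nonneg_on_scale.
split; first by rewrite wsum_app wsum_scale la1 wL wsum_cons /=; ring.
move=> i; rewrite wcomb_app wcomb_scale wcomb_cons /=.
have := Rmult_le_compat_l _ _ _ x_ge0 (la_a i); have := cL i; rewrite /pt; lra.
Qed.

Lemma np_sub_np A B p : np_sub A B -> NP A p -> NP B p.
Proof.
move=> AB [l [Al [l1 lp]]]; have [L [BL [L1 Ll]]] := np_sub_combination AB Al.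
exists L; do 2!split=> //; first by rewrite L1.
by move=> i; apply: Rle_trans (Ll i) (lp i).
Qed.

Lemma np_sub_incl A B : (forall e, A e -> B e) -> np_sub A B.
Proof. by move=> AB e /AB /np_pt. Qed.

Lemma np_sub_trans A B C : np_sub A B -> np_sub B C -> np_sub A C.
Proof. by move=> AB BC e /AB /(np_sub_np BC). Qed.

#[global] Instance np_sub_rewrite : RewriteRelation np_sub := {}.

#[global] Instance np_sub_preorder : PreOrder np_sub.
Proof. by split; [move=> A; apply: np_sub_incl | move=> A B C; apply: np_sub_trans]. Qed.

#[global] Instance np_equiv_equivalence : Equivalence np_equiv.
Proof.
split; first by move=> A; split; reflexivity.
  by move=> A B [].
by move=> A B C [AB BA] [BC CB]; split; etransitivity; eassumption.
Qed.

#[global] Instance np_sub_np_equiv : Proper (np_equiv ==> np_equiv ==> iff) np_sub.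
Proof.
move=> A A' [AA' A'A] B B' [BB' B'B]; split=> AB.
  exact: np_sub_trans A'A (np_sub_trans AB BB').
exact: np_sub_trans AA' (np_sub_trans AB B'B).
Qed.

Lemma np_equiv_sameset A B : sameset A B -> np_equiv A B.
Proof. by move=> AB; split; apply: np_sub_incl => e /AB. Qed.

Lemma np_equiv_np A B p : np_equiv A B -> NP A p <-> NP B p.
Proof. by move=> [AB BA]; split; apply: np_sub_np. Qed.

Lemma msum_incl_comm A B e : msum A B e -> msum B A e.
Proof.
by move=> [a [b [Aa [Bb eab]]]]; exists b, a; do 2!split=> //; move=> i; rewrite eab addnC.
Qed.

Lemma msumC A B : np_equiv (msum A B) (msum B A).
Proof. by split; apply: np_sub_incl => e; apply: msum_incl_comm. Qed.

Lemma msumA A B C : np_equiv (msum (msum A B) C) (msum A (msum B C)).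
Proof.
apply: np_equiv_sameset => e; split.
  move=> [x [c [[a [b [Aa [Bb xab]]]] [Cc ec]]]].
  exists a, (fun i => (b i + c i)%N); split=> //; split; first by exists b, c.
  by move=> i; rewrite ec xab addnA.
move=> [a [x [Aa [[b [c [Bb [Cc xbc]]]] ea]]]].
exists (fun i => (a i + b i)%N), c; split; first by exists a, b.
by split=> // i; rewrite ea xbc addnA.
Qed.

Lemma msum_vb1 A : np_equiv (msum A (@vb1 m)) A.
Proof.
apply: np_equiv_sameset => e; split.
  move=> [a [b [Aa [b0 eab]]]]; suff -> : e = a by [].
  by apply: functional_extensionality => i; rewrite eab b0 addn0.
by move=> Ae; exists e, (fun _ => 0%N); do 2!split=> //; move=> i; rewrite addn0.
Qed.

Lemma msum_vb0 A e : ~ msum A (@vb0 m) e.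
Proof. by move=> [a [b [_ []]]]. Qed.

Lemma msum_np_sub_l A A' B : np_sub A A' -> np_sub (msum A B) (msum A' B).
Proof.
move=> AA' e [a [b [Aa [Bb eab]]]]; have [l [A'l [l1 la]]] := AA' a Aa.
exists (shift b l); split.
  apply/Forall_map; apply: Forall_impl A'l => c [A'c c_ge0]; split=> //.
  by exists c.2, b.
split=> [|i]; first by rewrite wsum_shift.
by rewrite wcomb_shift l1 /pt eab plus_INR; have := la i; rewrite /pt; lra.
Qed.

#[global] Instance msum_np_sub : Proper (np_sub ==> np_sub ==> np_sub) msum.
Proof.
move=> A A' AA' B B' BB'; apply: np_sub_trans (msum_np_sub_l (B := B) AA') _.
rewrite (msumC A' B) (msumC A' B'); exact: msum_np_sub_l.
Qed.

#[global] Instance msum_np_equiv : Proper (np_equiv ==> np_equiv ==> np_equiv) msum.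
Proof. by move=> A A' [AA' A'A] B B' [BB' B'B]; split; apply: msum_np_sub. Qed.

#[global] Instance munion_np_sub : Proper (np_sub ==> np_sub ==> np_sub) munion.
Proof.
move=> A A' AA' B B' BB' e [/AA' | /BB']; apply: np_mono => x; rewrite /munion; tauto.
Qed.

#[global] Instance munion_np_equiv : Proper (np_equiv ==> np_equiv ==> np_equiv) munion.
Proof. by move=> A A' [AA' A'A] B B' [BB' B'B]; split; apply: munion_np_sub. Qed.

Lemma munion_absorb A B : np_sub A B -> np_equiv (munion A B) B.
Proof.
move=> AB; split; last by apply: np_sub_incl => e; right.
by move=> e [/AB | /np_pt].
Qed.

Lemma pt_inj a e : (forall i, pt a i = pt e i) -> a = e.
Proof. by move=> ae; apply: functional_extensionality => i; exact: INR_eq (ae i). Qed.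

Lemma vertex_minimal A v x : is_vertex (NP A) v -> NP A x ->
  (forall i, x i <= v i) -> forall i, x i = v i.
Proof.
move=> [Av vv] Ax xv.
have Ax' : NP A (fun i => 2 * v i - x i) by apply: np_up Av _ => i; have := xv i; lra.
have xx' : forall i, x i = 2 * v i - x i.
  by apply: (vv _ _ (/ 2) Ax Ax'); [lra | lra | move=> i; field].
by move=> i; have := xx' i; lra.
Qed.

Lemma vertex_convex_le A v p q t : is_vertex (NP A) v -> NP A p -> NP A q ->
  0 < t < 1 -> (forall i, t * p i + (1 - t) * q i <= v i) -> forall i, p i = v i.
Proof.
move=> vA Ap Aq [t_gt0 t_lt1] pqv.
pose d i := v i - (t * p i + (1 - t) * q i).
have Apd : NP A (fun i => p i + d i) by apply: np_up Ap _ => i; have := pqv i; rewrite /d; lra.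
have Aqd : NP A (fun i => q i + d i) by apply: np_up Aq _ => i; have := pqv i; rewrite /d; lra.
have pq : forall i, p i = q i.
  move=> i; have := proj2 vA _ _ _ Apd Aqd t_gt0 t_lt1 ltac:(move=> j; rewrite /d; ring) i; lra.
apply: vertex_minimal vA Ap _ => i; have := pqv i; rewrite -pq; lra.
Qed.

Lemma vertex_in_combination A v l : is_vertex (NP A) v -> nonneg_on A l ->
  wsum l = 1 -> (forall i, wcomb l i <= v i) -> exists2 a, A a & forall i, pt a i = v i.
Proof.
move=> vA; elim=> [|[x a] {}l [Aa x_ge0] Al IH]; first by rewrite /=; lra.
rewrite /= in Aa x_ge0; move=> l1 lv; rewrite wsum_cons /= in l1.
have lcons i : wcomb ((x, a) :: l) i = x * pt a i + wcomb l i by rewrite wcomb_cons.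
have [x_gt0|x0] := Rle_lt_or_eq_dec _ _ x_ge0; last first.
  by apply: IH => [|i]; [lra | have := lv i; rewrite lcons -x0; lra].
exists a => //.
have l_ge0 := wsum_ge0 Al; have c_ge0 i := wcomb_ge0 i Al.
have [x_lt1|x1] := Rle_lt_or_eq_dec x 1 ltac:(lra).
  apply: (vertex_convex_le (t := x) vA (np_pt Aa) (np_normalize Al _)) => [|//|i]; first lra.
  have -> : (1 - x) * (wcomb l i / wsum l) = wcomb l i by rewrite -l1; field; lra.
  by have := lv i; rewrite lcons.
by apply: vertex_minimal vA (np_pt Aa) _ => i; have := lv i; have := c_ge0 i; rewrite lcons x1; lra.
Qed.

Lemma vert_sub A e : vert A e -> A e.
Proof.
move=> vAe; have [l [Al [l1 le]]] := proj1 vAe.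
by have [a Aa /pt_inj <-] := vertex_in_combination vAe Al l1 le.
Qed.

Definition dominated k (F : list (mon m)) a :=
  exists f, In f F /\ forall i : 'I_m, (i < k)%N -> (f i <= a i)%N.

Definition basis_upto k A F := (forall f, In f F -> A f) /\ forall a, A a -> dominated k F a.

Lemma dominated_app_l k F G a : dominated k F a -> dominated k (F ++ G) a.
Proof. by move=> [f [Ff fa]]; exists f; split=> //; apply: in_or_app; left. Qed.

Lemma dominated_app_r k F G a : dominated k G a -> dominated k (F ++ G) a.
Proof. by move=> [f [Gf fa]]; exists f; split=> //; apply: in_or_app; right. Qed.

Lemma incl_app_in (P : mon m -> Prop) F G :
  (forall f, In f F -> P f) -> (forall f, In f G -> P f) -> forall f, In f (F ++ G) -> P f.
Proof. by move=> PF PG f fFG; case: (in_app_or F G f fFG) => [/PF | /PG]. Qed.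

Lemma list_max_bound (F : list (mon m)) (h : mon m -> nat) :
  exists N, forall f, In f F -> (h f <= N)%N.
Proof.
elim: F => [|f F [N HN]]; first by exists 0%N.
exists (maxn (h f) N) => g [<- | /HN gN]; first exact: leq_maxl.
exact: leq_trans gN (leq_maxr _ _).
Qed.

Section DicksonStep.
Variable k : 'I_m.
Hypothesis dickson_k : forall A, exists F, basis_upto k A F.

Lemma dickson_slices A n : exists G, (forall g, In g G -> A g) /\
  forall a, A a -> (a k < n)%N -> dominated k.+1 G a.
Proof.
elim: n => [|n [G [AG GA]]]; first by exists [::].
have [Fn [AFn FnA]] := dickson_k (fun a => A a /\ a k = n).
exists (Fn ++ G); split; first by apply: incl_app_in => // f /AFn [].
move=> a Aa; rewrite ltnS leq_eqVlt => /orP [/eqP an | /(GA a Aa)]; last exact: dominated_app_r.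
apply: dominated_app_l; have [f [Fnf fa]] := FnA a (conj Aa an).
exists f; split=> // i; rewrite ltnS leq_eqVlt => /orP [/eqP /val_inj -> | /fa //].
by have [_ ->] := AFn f Fnf; rewrite an.
Qed.

Lemma dickson_succ A : exists F, basis_upto k.+1 A F.
Proof.
have [F0 [AF0 F0A]] := dickson_k A.
have [N F0N] := list_max_bound F0 (fun f => f k).
have [G [AG GA]] := dickson_slices A N.+1.
exists (F0 ++ G); split; first exact: incl_app_in.
move=> a Aa; have [f [F0f fa]] := F0A a Aa.
have [f_a | a_f] := leqP (f k) (a k).
  apply: dominated_app_l; exists f; split=> // i.
  by rewrite ltnS leq_eqVlt => /orP [/eqP /val_inj -> | /fa].
by apply/dominated_app_r/GA => //; have := F0N f F0f; lia.
Qed.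

End DicksonStep.

Lemma dickson_upto k : (k <= m)%N -> forall A, exists F, basis_upto k A F.
Proof.
elim: k => [_ A | k IH k_lt_m A].
  have [[a0 Aa0] | A0] := classic (exists a, A a).
    by exists [:: a0]; split=> [f [<- | []] | a _] //; exists a0; split; [left|].
  by exists [::]; split=> // a Aa; case: A0; exists a.
exact: (dickson_succ (k := Ordinal k_lt_m)) (IH (ltnW k_lt_m)) A.
Qed.

Lemma dickson A : exists F, (forall f, In f F -> A f) /\
  forall a, A a -> exists f, In f F /\ forall i, (f i <= a i)%N.
Proof.
have [F [AF FA]] := dickson_upto (leqnn m) A; exists F; split=> // a /FA [f [Ff fa]].
by exists f; split=> // i; apply: fa.
Qed.

Lemma combination_split A f l : nonneg_on A l -> exists a l',
  0 <= a /\ nonneg_on (fun e => A e /\ e <> f) l' /\ a + wsum l' = wsum l /\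
  forall i, a * pt f i + wcomb l' i = wcomb l i.
Proof.
elim=> [|[x e] {}l [Ae x_ge0] _ [a [l' [a_ge0 [Al' [al' al'l]]]]]].
  exists 0, [::]; split; first lra.
  by split; [constructor | split=> [|i]; rewrite /=; ring].
rewrite /= in Ae x_ge0; have [-> | ef] := classic (e = f).
  exists (x + a), l'; split; first lra.
  by split=> //; split=> [|i]; rewrite ?wsum_cons ?wcomb_cons -?al' -?al'l /pt /=; ring.
exists a, ((x, e) :: l'); split=> //; split; first by constructor.
by split=> [|i]; rewrite ?wsum_cons ?wcomb_cons -?al' -?al'l /pt /=; ring.
Qed.

Lemma vertex_of_isolated A f : A f -> ~ NP (fun e => A e /\ e <> f) (pt f) ->
  is_vertex (NP A) (pt f).
Proof.
move=> Af f_out; split; first exact: np_pt.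
move=> p q t [lp [Alp [lp1 lpp]]] [lq [Alq [lq1 lqq]]] t_gt0 t_lt1 fpq.
have [ap [rp [ap_ge0 [Arp [rp1 rpp]]]]] := combination_split f Alp.
have [aq [rq [aq_ge0 [Arq [rq1 rqq]]]]] := combination_split f Alq.
have rp_ge0 := wsum_ge0 Arp; have rq_ge0 := wsum_ge0 Arq.
have tp i : t * (ap * pt f i + wcomb rp i) <= t * p i.
  by rewrite rpp; apply: Rmult_le_compat_l; [lra | exact: lpp].
have tq i : (1 - t) * (aq * pt f i + wcomb rq i) <= (1 - t) * q i.
  by rewrite rqq; apply: Rmult_le_compat_l; [lra | exact: lqq].
(* If p and q put total weight < 1 on f, the remaining weight exhibits pt f in
   the Newton polyhedron of the other points; otherwise p = q = pt f. *)
have [al_lt1 | al_ge1] := Rlt_or_le (t * ap + (1 - t) * aq) 1.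
  case: f_out; set r := scale t rp ++ scale (1 - t) rq.
  have Ar : nonneg_on (fun e => A e /\ e <> f) r.
    by apply: nonneg_on_app; apply: nonneg_on_scale => //; lra.
  have r1 : wsum r = 1 - (t * ap + (1 - t) * aq).
    by rewrite wsum_app !wsum_scale; rewrite lp1 in rp1; rewrite lq1 in rq1; nra.
  apply: (np_scaled_combination Ar) => [|i]; rewrite r1; first lra.
  by rewrite wcomb_app !wcomb_scale; have := tp i; have := tq i; have := fpq i; nra.
rewrite lp1 in rp1; rewrite lq1 in rq1.
have tp_slack : 0 <= t * (1 - ap) by apply: Rmult_le_pos; lra.
have tq_slack : 0 <= (1 - t) * (1 - aq) by apply: Rmult_le_pos; lra.
have [ap1 aq1] : ap = 1 /\ aq = 1 by split; nra.
move=> i; have := tp i; have := tq i; have := fpq i; rewrite ap1 aq1 => fi tqi tpi.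
have rp_i : 0 <= t * wcomb rp i by apply: Rmult_le_pos; [lra | exact: wcomb_ge0 Arp].
have rq_i : 0 <= (1 - t) * wcomb rq i by apply: Rmult_le_pos; [lra | exact: wcomb_ge0 Arq].
have pf : t * (p i - pt f i) = 0 by lra.
have qf : (1 - t) * (q i - pt f i) = 0 by lra.
case: (Rmult_integral _ _ pf) => [|p_f]; first lra.
case: (Rmult_integral _ _ qf) => [|q_f]; first lra.
lra.
Qed.

Definition mon_eq_dec (a b : mon m) : {a = b} + {a <> b} := excluded_middle_informative (a = b).

Lemma vertex_reduction n (F : list (mon m)) : (length F <= n)%coq_nat -> exists F',
  (forall e, In e F' -> In e F) /\ np_sub (fun e => In e F) (fun e => In e F') /\
  forall f, In f F' -> is_vertex (NP (fun e => In e F')) (pt f).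
Proof.
elim: n F => [|n IH] F F_n.
  case: F F_n => [_ | g F /= F_n]; last lia.
  by exists [::]; split=> //; split=> [e [] | f []].
have [all_vert | some_nvert] :=
  classic (forall f, In f F -> is_vertex (NP (fun e => In e F)) (pt f)).
  by exists F; split=> //; split=> //; reflexivity.
have [f f_nvert'] := not_all_ex_not _ _ some_nvert.
have [Ff f_nvert] := imply_to_and _ _ f_nvert'.
pose F1 := remove mon_eq_dec f F.
have F1E e : In e F1 <-> In e F /\ e <> f.
  by split; [apply: in_remove | move=> [eF ef]; apply: in_in_remove].
have f_F1 : NP (fun e => In e F1) (pt f).
  apply: NNPP => f_out; apply/f_nvert/vertex_of_isolated => // f_in.
  by apply/f_out/(np_mono _ f_in) => e /F1E.
have F1_n : (length F1 <= n)%coq_nat.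
  by have := remove_length_lt mon_eq_dec F f Ff; rewrite -/F1; lia.
have [F' [F'F1 [F1F' F'vert]]] := IH F1 F1_n.
exists F'; split; first by move=> e /F'F1 /F1E [].
split=> //; apply: np_sub_trans F1F' => e Fe.
have [-> // | ef] := classic (e = f).
by apply/np_pt/F1E.
Qed.

Lemma is_vertex_ext (P Q : rpoint m -> Prop) v : (forall p, P p <-> Q p) ->
  is_vertex P v -> is_vertex Q v.
Proof. by move=> PQ [/PQ Pv vv]; split=> // p q t /PQ Pp /PQ Pq; apply: vv. Qed.

Lemma np_sub_vert A : np_sub A (vert A).
Proof.
have [F [AF FA]] := dickson A.
have [F' [F'F [FF' F'vert]]] := vertex_reduction (le_n (length F)).
have A_F : np_sub A (fun e => In e F).
  move=> a /FA [f [Ff fa]]; apply: np_up (np_pt Ff) _ => i.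
  exact/le_INR/ssrnat.leP/fa.
have F'_A : np_equiv (fun e => In e F') A.
  split; first by apply: np_sub_incl => e /F'F /AF.
  exact: np_sub_trans A_F FF'.
apply: np_sub_trans (np_sub_trans A_F FF') (np_sub_incl _) => f /F'vert.
by apply: is_vertex_ext => p; apply: np_equiv_np.
Qed.

Lemma vert_np_equiv A : np_equiv (vert A) A.
Proof. by split; [apply: np_sub_incl => e; apply: vert_sub | apply: np_sub_vert]. Qed.

Lemma vert_sameset A B : np_equiv A B -> sameset (vert A) (vert B).
Proof.
by move=> AB e; split; apply: is_vertex_ext => p; apply: np_equiv_np; [|symmetry].
Qed.

Lemma np_equiv_empty A B : np_equiv A B -> (forall e, ~ A e) -> forall e, ~ B e.
Proof. by move=> [_ BA] A0 e /BA; apply: np_empty. Qed.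

Lemma vert_finite A : exists F, forall v, vert A v -> In v F.
Proof.
have [F [AF FA]] := dickson A; exists F => v vAv.
have [f [Ff fv]] := FA v (vert_sub vAv).
suff /pt_inj <- : forall i, pt f i = pt v i by [].
apply: vertex_minimal vAv (np_pt (AF f Ff)) _ => i.
exact/le_INR/ssrnat.leP/fv.
Qed.

Lemma vert_msum_unique A B v a b a' b' : vert (msum A B) v ->
  A a -> B b -> (forall i, v i = (a i + b i)%N) ->
  A a' -> B b' -> (forall i, v i = (a' i + b' i)%N) -> a = a'.
Proof.
move=> [_ vv] Aa Bb vab Aa' Bb' vab'.
have ab' : NP (msum A B) (pt (fun i => (a i + b' i)%N)) by apply: np_pt; exists a, b'.
have a'b : NP (msum A B) (pt (fun i => (a' i + b i)%N)) by apply: np_pt; exists a', b.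
have mid : forall i, pt v i = / 2 * pt (fun i => (a i + b' i)%N) i +
    (1 - / 2) * pt (fun i => (a' i + b i)%N) i.
  move=> i; rewrite /pt !plus_INR.
  have := f_equal INR (vab i); have := f_equal INR (vab' i); rewrite !plus_INR => h1 h2.
  by rewrite h1 in h2 *; lra.
have eq_ab := vv _ _ (/ 2) ab' a'b ltac:(lra) ltac:(lra) mid.
apply: functional_extensionality => i; have := INR_eq _ _ (eq_ab i).
by have := vab i; have := vab' i; lia.
Qed.

End NewtonPolyhedra.

Section SemifieldVB.
Variable m : nat.
Implicit Types (A B : mset m) (x y : vbfrac m).

Lemma vbmul_np_equiv A B : np_equiv (vbmul A B) (msum A B).
Proof. exact: vert_np_equiv. Qed.

Lemma vbplus_np_equiv A B : np_equiv (vbplus A B) (munion A B).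
Proof. exact: vert_np_equiv. Qed.

Lemma vbmul_vb0 A e : ~ vbmul A (@vb0 m) e.
Proof. by move/vert_sub; apply: msum_vb0. Qed.

Lemma vbeq_np_equiv x y : np_equiv (msum x.1 y.2) (msum x.2 y.1) -> vbeq x y.
Proof. exact: vert_sameset. Qed.

Lemma vbfle_np_sub x y : np_sub (msum x.1 y.2) (msum x.2 y.1) -> vbfle x y.
Proof.
move=> xy; apply: vbeq_np_equiv => /=.
rewrite vbplus_np_equiv !vbmul_np_equiv munion_absorb //.
by rewrite !msumA (msumC y.1); reflexivity.
Qed.

End SemifieldVB.

Local Open Scope ring_scope.

Section PowerSeries.
Variables (m : nat) (K : fieldType).
Implicit Types (f g h u w : pser m K) (c : K).

Lemma mon_le_sum (e : mon m) i : (e i <= \sum_(j < m) e j)%N.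
Proof. by rewrite (bigD1 i) //= leq_addr. Qed.

Lemma supp_pmul_sub f g e : supp (pmul f g) e -> msum (supp f) (supp g) e.
Proof.
move=> fge; apply: NNPP => fg_out; move/eqP: fge; apply.
rewrite /pmul big1 // => a /forallP ae.
have [fa0 | fa] := eqVneq (f (fun i => nat_of_ord (a i))) 0; first by rewrite fa0 mul0r.
have [ga0 | ga] := eqVneq (g (fun i => (e i - a i)%N)) 0; first by rewrite ga0 mulr0.
case: fg_out; exists (fun i => nat_of_ord (a i)), (fun i => (e i - a i)%N).
by do 2!split=> //; move=> i; rewrite subnKC.
Qed.

Lemma supp_pmul_vert f g v : vert (msum (supp f) (supp g)) v -> supp (pmul f g) v.
Proof.
move=> vv; have [a [b [fa [gb vab]]]] := vert_sub vv.
have a_lt i : (a i < pbound v)%N.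
  by rewrite /pbound ltnS (leq_trans _ (mon_le_sum v i)) // vab leq_addr.
pose a0 : {ffun 'I_m -> 'I_(pbound v)} := [ffun i => Ordinal (a_lt i)].
have a0E : (fun i => nat_of_ord (a0 i)) = a.
  by apply: functional_extensionality => i; rewrite ffunE.
have b0E : (fun i => (v i - a0 i)%N) = b.
  by apply: functional_extensionality => i; rewrite ffunE /= vab addKn.
(* By uniqueness of the decomposition of v, only the term a0 of the
   convolution survives. *)
rewrite /supp /pmul (bigD1 a0) /=; last by apply/forallP => i; rewrite ffunE /= vab leq_addr.
rewrite big1 ?addr0; first by rewrite a0E b0E mulf_neq0.
move=> a' /andP [/forallP a'v a'_a0].
have [fa'0 | fa'] := eqVneq (f (fun i => nat_of_ord (a' i))) 0; first by rewrite fa'0 mul0r.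
have [ga'0 | ga'] := eqVneq (g (fun i => (v i - a' i)%N)) 0; first by rewrite ga'0 mulr0.
have a'a := vert_msum_unique vv fa gb vab fa' ga' (fun i => esym (subnKC (a'v i))).
case/eqP: a'_a0; apply/ffunP => i; apply: val_inj.
by rewrite ffunE /= -[a i]/((fun i => a i) i) a'a.
Qed.

Lemma supp_pmul f g : np_equiv (supp (pmul f g)) (msum (supp f) (supp g)).
Proof.
split; first by apply: np_sub_incl => e; apply: supp_pmul_sub.
rewrite -{1}(vert_np_equiv (msum _ _)).
by apply: np_sub_incl => e; apply: supp_pmul_vert.
Qed.

Lemma trop_ps_np_equiv f : np_equiv (trop_ps f) (supp f).
Proof. exact: vert_np_equiv. Qed.

Lemma supp_padd u w : np_sub (supp (padd u w)) (munion (supp u) (supp w)).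
Proof.
apply: np_sub_incl => e; rewrite /supp /padd /munion.
by have [-> | ] := eqVneq (u e) 0; [rewrite add0r; right | left].
Qed.

Lemma pmul_pconst c f : pmul (pconst c) f = (fun e => c * f e).
Proof.
apply: functional_extensionality => e.
pose z : {ffun 'I_m -> 'I_(pbound e)} := [ffun i => ord0].
rewrite /pmul (bigD1 z) /=; last by apply/forallP => i; rewrite ffunE.
rewrite big1 ?addr0 => [|a /andP [_ a_z]].
  have -> : (fun i => nat_of_ord (z i)) = (fun _ => 0%N).
    by apply: functional_extensionality => i; rewrite ffunE.
  have -> : (fun i => (e i - z i)%N) = e.
    by apply: functional_extensionality => i; rewrite ffunE subn0.
  by rewrite /pconst; case: ifPn => // /forallP[].
rewrite /pconst; case: ifPn => [/forallP a0 | _]; last by rewrite mul0r.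
by case/eqP: a_z; apply/ffunP => i; apply: val_inj; rewrite ffunE; apply/eqP/a0.
Qed.

Lemma pmul_pconst1 f : pmul (pconst 1) f = f.
Proof. by rewrite pmul_pconst; apply: functional_extensionality => e; rewrite mul1r. Qed.

Lemma pmulZl c h g : pmul (fun e => c * h e) g = (fun e => c * pmul h g e).
Proof.
apply: functional_extensionality => e.
by rewrite /pmul mulr_sumr; apply: eq_bigr => a _; rewrite mulrA.
Qed.

Lemma supp_pconst c : c != 0 -> np_equiv (supp (pconst c)) (@vb1 m).
Proof.
move=> c0; apply: np_equiv_sameset => e; rewrite /supp /pconst /vb1.
case: ifPn => [/forallP e0 | /forallPn [i ei]]; first by split=> // _ i; apply/eqP.
by rewrite eqxx; split=> // /(_ i) /eqP; rewrite (negbTE ei).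
Qed.

Lemma natr_inj_pchar0 : [pchar K] =i pred0 -> injective (fun n : nat => n%:R : K).
Proof.
move=> /pcharf0P char0 n k; wlog nk : n k / (n <= k)%N => [wlog_nk | nk_eq].
  by move=> nk_eq; case: (leqP n k) => [|/ltnW] /wlog_nk; [apply | move=> /(_ (esym nk_eq))].
have : (k - n)%:R == 0 :> K by rewrite natrB // nk_eq subrr.
by rewrite char0 subn_eq0 => kn; apply/eqP; rewrite eqn_leq nk kn.
Qed.

Lemma exists_nonzero_notin (s : seq K) : [pchar K] =i pred0 ->
  exists2 c : K, c != 0 & c \notin s.
Proof.
move=> char0; pose t := [seq n.+1%:R | n <- iota 0 (size s).+1] : seq K.
have t_uniq : uniq t.
  by rewrite map_inj_uniq ?iota_uniq // => n k /(natr_inj_pchar0 char0) [].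
have /allPn [_ /mapP [n _ ->] ns] : ~~ all (mem s) t.
  apply/negP => /allP /(uniq_leq_size t_uniq).
  by rewrite size_map size_iota ltnn.
by exists n.+1%:R; first by move/pcharf0P: char0 => ->.
Qed.

Lemma supp_generic_combination u w : [pchar K] =i pred0 -> exists2 c : K, c != 0 &
  np_equiv (supp (fun e => u e + c * w e)) (munion (supp u) (supp w)).
Proof.
move=> char0; have [F F_vert] := vert_finite (munion (supp u) (supp w)).
have [c c0 c_generic] := exists_nonzero_notin [seq - u v / w v | v <- F] char0.
exists c => //; split.
  apply: np_sub_incl => e; rewrite /supp /munion.
  by have [-> | ] := eqVneq (u e) 0; [rewrite add0r mulf_eq0 negb_or => /andP []; right | left].
rewrite -{1}(vert_np_equiv (munion _ _)); apply: np_sub_incl => v vv.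
have [w0 | w_v] := eqVneq (w v) 0.
  by rewrite /supp w0 mulr0 addr0; case: (vert_sub vv); rewrite /supp ?w0 ?eqxx.
apply/negP => /eqP uv0; move/negP: c_generic; apply.
suff -> : c = - u v / w v by apply: map_In_mem; apply: F_vert.
by apply/(canRL (mulfK w_v))/eqP; rewrite -addr_eq0 addrC uv0.
Qed.

End PowerSeries.

Section TropicalValuation.
Variables (m : nat) (K : fieldType).
Implicit Types (p q : lfrac m K) (c : K).

Lemma trop_well_defined q q' : leq_frac q q' -> vbeq (trop q) (trop q').
Proof.
case: q q' => [f g] [h k] /= fk_hg.
have fkE : pmul f k = pmul h g.
  by apply: functional_extensionality => e; apply/eqP; rewrite -subr_eq0; apply/eqP/fk_hg.
apply: vbeq_np_equiv => /=.
by rewrite !trop_ps_np_equiv -supp_pmul fkE supp_pmul msumC; reflexivity.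
Qed.

Lemma trop_lmul p q : vbeq (trop (lmul p q)) (vbfmul (trop p) (trop q)).
Proof.
case: p q => [f g] [h k]; apply: vbeq_np_equiv => /=.
by rewrite !vbmul_np_equiv !trop_ps_np_equiv !supp_pmul msumC; reflexivity.
Qed.

Lemma trop_ladd_le p q : vbfle (trop (ladd p q)) (vbfplus (trop p) (trop q)).
Proof.
case: p q => [f g] [h k]; apply: vbfle_np_sub => /=.
rewrite vbplus_np_equiv !vbmul_np_equiv !trop_ps_np_equiv !supp_pmul supp_padd !supp_pmul.
by rewrite (msumC (supp h)) msumC; reflexivity.
Qed.

Lemma trop_eq0 q : vbeq (trop q) (vbf0 m) <-> pzero q.1.
Proof.
case: q => [f g]; rewrite /vbeq /=.
have f_eqv : np_equiv (vbmul (trop_ps f) (@vb1 m)) (supp f).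
  by rewrite vbmul_np_equiv msum_vb1 trop_ps_np_equiv; reflexivity.
split=> [f0 e | f0 e].
  apply/eqP/negPn/negP => fe; apply: (np_equiv_empty f_eqv _ fe) => e' /f0.
  exact: vbmul_vb0.
split=> [fe | /vbmul_vb0 //]; exfalso.
by apply: (np_equiv_empty (symmetry f_eqv) _ fe) => e'; rewrite /supp f0 eqxx.
Qed.

Definition indicator (A : mset m) : pser m K :=
  fun e => if excluded_middle_informative (A e) then 1 else 0.

Lemma supp_indicator A : sameset (supp (indicator A)) A.
Proof.
move=> e; rewrite /supp /indicator.
by case: excluded_middle_informative => Ae; rewrite ?oner_eq0 ?eqxx; split.
Qed.

Lemma trop_surj x : (exists e, x.2 e) -> exists q, lvalid q /\ vbeq (trop q) x.
Proof.
case: x => [A B] /= [e Be]; exists (indicator A, indicator B); split.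
  by move=> /(_ e) /eqP; apply/negP/(supp_indicator B e).
apply: vbeq_np_equiv => /=.
rewrite !trop_ps_np_equiv !(np_equiv_sameset (supp_indicator _)) msumC; reflexivity.
Qed.

Lemma lvalid_lconst c : lvalid (lconst m c).
Proof.
move=> /(_ (fun _ => 0%N)) /eqP; rewrite /= /pconst.
have -> : [forall i : 'I_m, 0%N == 0%N] by apply/forallP.
by rewrite oner_eq0.
Qed.

Lemma trop_lconst_np_equiv c : c != 0 ->
  np_equiv (msum (trop (lconst m c)).1 (@vb1 m)) (msum (trop (lconst m c)).2 (@vb1 m)).
Proof.
move=> c0; rewrite /= !trop_ps_np_equiv supp_pconst // supp_pconst ?oner_neq0 //; reflexivity.
Qed.

Lemma trop_lconst c : c != 0 -> vbeq (trop (lconst m c)) (vbf1 m).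
Proof. by move=> c0; apply/vbeq_np_equiv/trop_lconst_np_equiv. Qed.

Lemma trop_lconst_le1 c : c != 0 -> vbfle (trop (lconst m c)) (vbf1 m).
Proof. by move=> c0; apply/vbfle_np_sub; case: (trop_lconst_np_equiv c0). Qed.

Lemma trop_bezout a b : [pchar K] =i pred0 -> exists2 c : K, c != 0 &
  vbeq (trop (ladd (lmul (lconst m 1) a) (lmul (lconst m c) b))) (vbfplus (trop a) (trop b)).
Proof.
case: a b => [f g] [h k] char0.
have [c c0 generic] := supp_generic_combination (pmul f k) (pmul h g) char0.
exists c => //; apply: vbeq_np_equiv.
rewrite /= !pmul_pconst1 pmul_pconst pmulZl.
rewrite vbplus_np_equiv !vbmul_np_equiv !trop_ps_np_equiv.
by rewrite [supp (padd _ _)]generic !supp_pmul (msumC (supp h)) msumC; reflexivity.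
Qed.

End TropicalValuation.

Theorem proposition2p19 (K : fieldType) (m : nat) :
  [pchar K] =i pred0 -> (0 < m)%N ->
  (* trop is well defined on K((t)) *)
  (forall q q' : lfrac m K, lvalid q -> lvalid q' -> leq_frac q q' ->
     vbeq (trop q) (trop q')) /\
  (* multiplicative *)
  (forall p q : lfrac m K, lvalid p -> lvalid q ->
     vbeq (trop (lmul p q)) (vbfmul (trop p) (trop q))) /\
  (* trop(a+b) <= trop a (+) trop b *)
  (forall p q : lfrac m K, lvalid p -> lvalid q ->
     vbfle (trop (ladd p q)) (vbfplus (trop p) (trop q))) /\
  (* zero only at 0 *)
  (forall q : lfrac m K, lvalid q -> (vbeq (trop q) (vbf0 m) <-> pzero q.1)) /\
  (* surjective onto VB(t) *)
  (forall x : vbfrac m, isVBf x -> exists q : lfrac m K, lvalid q /\ vbeq (trop q) x) /\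
  (* K-algebra *)
  (forall c : K, c != 0 -> vbeq (trop (lconst m c)) (vbf1 m)) /\
  (* Bezout *)
  (forall a b : lfrac m K, lvalid a -> lvalid b ->
     exists x y : lfrac m K, lvalid x /\ lvalid y /\
       vbfle (trop x) (vbf1 m) /\ vbfle (trop y) (vbf1 m) /\
       vbeq (trop (ladd (lmul x a) (lmul y b))) (vbfplus (trop a) (trop b))).
Proof.
move=> char0 _.
split; first by move=> q q' _ _; apply: trop_well_defined.
split; first by move=> p q _ _; apply: trop_lmul.
split; first by move=> p q _ _; apply: trop_ladd_le.
split; first by move=> q _; apply: trop_eq0.
split; first by move=> x [_ [_ B_ne0]]; apply: trop_surj.
split; first exact: trop_lconst.
move=> a b _ _; have [c c0 bezout] := trop_bezout a b char0.
exists (lconst m 1), (lconst m c).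
split; [exact: lvalid_lconst | split; first exact: lvalid_lconst].
by split; [exact/trop_lconst_le1/oner_neq0 | split; first exact: trop_lconst_le1].
Qed.
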